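(* Let $\Sigma^*$ be an $n\times n$ positive definite matrix with $\Omega^*=(\Sigma^* )^{-1}$ whose conditional independence structure is a tree $T^*$, let $\mathcal{L}$ be the set of leaves of $T^*$, let $D^*$ be a diagonal matrix with nonnegative entries satisfying $D^*_{aa}<1/\Omega^*_{aa}$ for all $a\in\mathcal{L}$, and let $\Sigma^o=\Sigma^*+D^*$. Then for every decomposition $\Sigma^o=\Sigma'+D'$ in which $\Sigma'$ is positive definite with conditional independence structure a tree $T'$, and $D'$ is diagonal with nonnegative entries satisfying $D'_{aa}<1/\Omega^*_{aa}$ for all $a\in\mathcal{L}$, we have $T'=T^*$.
   Context: For an $n\times n$ positive definite matrix $\Sigma$ with inverse $\Omega$, its conditional independence structure is the graph on $\{1,\dots,n\}$ with an edge $\{i,j\}$ ($i\neq j$) iff $\Omega_{ij}\neq 0$. *)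

From HB Require Import structures.
From mathcomp Require Import all_boot all_order all_algebra.
Set Implicit Arguments. Unset Strict Implicit. Unset Printing Implicit Defensive.
Import Order.TTheory GRing.Theory Num.Theory.
Local Open Scope ring_scope.

Definition posdef (R : realFieldType) (n : nat) (S : 'M[R]_n) : Prop :=
  S^T = S /\ forall x : 'cV[R]_n, x != 0 -> 0 < (x^T *m S *m x) 0 0.

(* Conditional independence structure of S: edge {i,j}, i != j,
   iff (S^-1)_{ij} != 0; stored as a set of ordered pairs (symmetric). *)
Definition ci_graph (R : realFieldType) (n : nat) (S : 'M[R]_n)
  : {set 'I_n * 'I_n} :=
  [set p | (p.1 != p.2) && (invmx S p.1 p.2 != 0)].

Definition adj (n : nat) (E : {set 'I_n * 'I_n}) : rel 'I_n :=
  fun i j => (i, j) \in E.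

Definition is_tree (n : nat) (E : {set 'I_n * 'I_n}) : Prop :=
  (forall i j : 'I_n, connect (adj E) i j) /\
  (forall s : seq 'I_n, uniq s -> (3 <= size s)%N -> ~~ cycle (adj E) s).

Definition is_leaf (n : nat) (E : {set 'I_n * 'I_n}) (a : 'I_n) : bool :=
  #|[set j | adj E a j]| == 1%N.

Definition nonneg_diag (R : realFieldType) (n : nat) (D : 'M[R]_n) : Prop :=
  is_diag_mx D /\ forall i, 0 <= D i i.

From mathcomp Require Import all_boot all_order all_algebra.
Import Order.TTheory GRing.Theory Num.Theory.
From mathcomp Require Import ring lra.

Set Implicit Arguments. Unset Strict Implicit. Unset Printing Implicit Defensive.

(* For a covariance S whose concentration graph is a tree, a vertex k separating
   i from j forces S_ij S_kk = S_ik S_kj, whereas if a path joins i to j avoiding k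
   then S_kk >= S_ik S_kj / S_ij + 1/Omega_kk: the ratio equals S_mk^2 / S_mm for
   the vertex m where the paths from i and j to k meet, and S_kk - S_mk^2 / S_mm,
   the variance of X_k given X_m, dominates 1/Omega_kk, its variance given all the
   other coordinates.  The two decompositions share their off-diagonal entries,
   hence these ratios.  If k separated i from j in T' but not in T*, this gives
   Sigma*_kk - Sigma'_kk >= 1/Omega*_kk > 0; then k separates no pair in T*
   (that would force Sigma*_kk <= Sigma'_kk), so k is a leaf of T*, and
   D'_kk >= Sigma*_kk - Sigma'_kk contradicts the bound on D' at leaves.  Thus
   every separation in T' is one in T*, every edge of T* is an edge of T', and a
   spanning tree contained in a tree is that tree. *)

Lemma connect_uniqP (T : finType) (e : rel T) x y : connect e x y ->
  exists p, [/\ path e x p, uniq (x :: p) & last x p = y].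
Proof.
by case/connectP=> p /shortenP[q eq uq _] ->; exists q.
Qed.

Lemma connected_subrel_forest (T : finType) (e1 e2 : rel T) :
  subrel e1 e2 -> symmetric e1 -> irreflexive e2 ->
  (forall x y, connect e1 x y) ->
  (forall s, uniq s -> (3 <= size s)%N -> ~~ cycle e2 s) ->
  e2 =2 e1.
Proof.
move=> e12 e1sym e2irr e1conn e2acyc a b; apply/idP/idP => [e2ab|/e12//].
apply: contraT => ne1ab.
have [[|u [|v q]] [e1p up /= lp]] := connect_uniqP (e1conn b a).
- by move: e2ab; rewrite -lp e2irr.
- by move: ne1ab; rewrite -lp e1sym; case/andP: e1p => ->.
have := e2acyc _ up isT; rewrite /cycle rcons_path.
by rewrite (sub_path e12 e1p) /= lp e2ab.
Qed.

Section TreeSeparation.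
Variables (T : finType) (e : rel T).

Definition avoid k : rel T := fun u v => [&& e u v, u != k & v != k].

Definition separates k x y := [&& x != k, y != k & ~~ connect (avoid k) x y].

Definition component k i : {set T} := [set x | (x != k) && connect (avoid k) i x].

Lemma path_avoidE k x p : x != k -> path (avoid k) x p = path e x p && (k \notin p).
Proof.
elim: p x => [|y p IH] x xk //=; rewrite in_cons negb_or (eq_sym k y) {1}/avoid xk.
by case: (eqVneq y k) => [->|yk]; rewrite /= ?andbF // IH // andbT andbA.
Qed.

Lemma connect_avoid_last k x p : path e x p -> k \notin x :: p ->
  connect (avoid k) x (last x p).
Proof.
rewrite in_cons negb_or eq_sym => ep /andP[xk kp].
by apply/connectP; exists p; rewrite ?path_avoidE ?ep.
Qed.

Lemma adj_connect_avoid k a b : e a b -> a != k -> b != k -> connect (avoid k) a b.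
Proof. by move=> eab ak bk; apply: connect1; rewrite /avoid eab ak bk. Qed.

Lemma separates_neq k x y : separates k x y -> [/\ x != k, y != k & x != y].
Proof.
by case/and3P=> -> -> nxy; split=> //; apply: contraNneq nxy => ->; rewrite connect0.
Qed.

Lemma separates_split k x y z : separates k x y -> z != k ->
  separates k x z || separates k z y.
Proof.
case/and3P=> xk yk nxy zk; rewrite /separates xk yk zk /= -negb_and.
by apply: contra nxy => /andP[]; apply: connect_trans.
Qed.

Lemma component_closed k i x y : x \in component k i -> y \notin component k i ->
  y != k -> ~~ e x y.
Proof.
rewrite !inE => /andP[xk ix] + yk; rewrite yk /= => niy.
by apply: contra niy => exy; apply: connect_trans ix (adj_connect_avoid _ _ _).
Qed.

Hypothesis esym : symmetric e.

Lemma connect_avoid_sym k : connect_sym (avoid k).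
Proof. by apply: sym_connect_sym => u v; rewrite /avoid esym [(u != k) && _]andbC. Qed.

Hypothesis eirr : irreflexive e.
Hypothesis eacyc : forall s : seq T, uniq s -> (3 <= size s)%N -> ~~ cycle e s.

Lemma separates_neighbours k a b : e k a -> e k b -> a != b -> separates k a b.
Proof.
move=> eka ekb ab.
have [ak bk] : a != k /\ b != k.
  by split; [move: eka | move: ekb]; apply: contraTneq => ->; rewrite eirr.
rewrite /separates ak bk /=; apply/negP => /connect_uniqP[p [ap up lp]].
move: ap; rewrite path_avoidE // => /andP[ap kp].
have p0 : p != [::] by apply: contraNneq ab => p0; rewrite -lp p0.
have ukap : uniq (k :: a :: p) by rewrite /= in_cons negb_or eq_sym ak kp.
have size_kap : (3 <= size (k :: a :: p))%N by case: p p0 {ap up lp kp ukap}.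
have /negP[] := eacyc ukap size_kap.
by rewrite /cycle rcons_path /= eka ap lp esym.
Qed.

Lemma interior_separates x p1 u p2 : path e x (p1 ++ u :: p2) ->
  uniq (x :: p1 ++ u :: p2) -> p2 != [::] -> separates u x (last u p2).
Proof.
case: p2 => [//|b q] + + _; rewrite cat_path -cat_cons cat_uniq /=.
move=> /andP[xp /and3P[eau eub bq]] /and3P[_ disj /andP[uq _]].
have [ux bx] : u \notin x :: p1 /\ b \notin x :: p1.
  by move: disj; rewrite negb_or => /andP[-> /norP[-> _]].
have ab : last x p1 != b by apply: contraNneq bx => <-; apply: mem_last.
have eua : e u (last x p1) by rewrite esym.
have xu : x != u by apply: contraNneq ux => <-; apply: mem_head.
have bqu : last b q != u by apply: contraNneq uq => <-; apply: mem_last.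
rewrite /separates xu bqu /=; apply/negP => cxy.
have /and3P[_ _ /negP[]] := separates_neighbours eua eub ab.
apply: connect_trans (connect_trans _ cxy) _.
- by rewrite connect_avoid_sym; apply: connect_avoid_last.
- by rewrite connect_avoid_sym; apply: connect_avoid_last.
Qed.

Hypothesis econn : forall x y, connect e x y.

Lemma separates_nonadj a b : a != b -> ~~ e a b -> exists k, separates k a b.
Proof.
move=> ab nab; have [[|u [|v q]] [ap up /= lp]] := connect_uniqP (econn a b).
- by rewrite lp eqxx in ab.
- by move: nab; rewrite -lp; case/andP: ap => ->.
by exists u; rewrite -lp; apply: (@interior_separates a [::] u (v :: q)).
Qed.

Lemma separates_edge i j k : e i j -> k != i -> k != j ->
  separates i k j || separates j k i.
Proof.
move=> eij ki kj; have [p [kp up lp]] := connect_uniqP (econn k j).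
have ij : i != j by apply: contraTneq eij => ->; rewrite eirr.
case: (boolP (i \in p)) => [ip|nip].
  apply/orP; left; move: kp up lp; case/splitPr: ip => p1 p2 kp up.
  rewrite last_cat /= => lp; rewrite -lp; apply: (interior_separates kp up).
  by apply: contraNneq ij => p20; rewrite -lp p20.
apply/orP; right; case/lastP: p kp up lp nip => [/= _ _ kj'|p' j' kp up].
  by rewrite kj' eqxx in kj.
rewrite last_rcons => jj nip; subst j'.
apply: (@interior_separates k p' j [:: i]) => //.
  by rewrite -cat_rcons cats1 rcons_path kp last_rcons esym eij.
by rewrite -cat_rcons cats1 -rcons_cons rcons_uniq up in_cons negb_or eq_sym ki nip.
Qed.

Lemma nonseparating_leaf k x : x != k -> (forall y z, ~~ separates k y z) ->
  #|[set j | e k j]| = 1%N.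
Proof.
move=> xk nsep; have /connectP[[|m p] /= km lp] := econn k x.
  by rewrite -lp eqxx in xk.
case/andP: km => ekm _; suff -> : [set j | e k j] = [set m] by rewrite cards1.
apply/setP => j.
rewrite !inE; apply/idP/eqP => [ekj|->//].
by apply/eqP; apply: contraT => jm; have := nsep j m; rewrite separates_neighbours.
Qed.

End TreeSeparation.

Local Open Scope ring_scope.

Section MxForm.
Variables (R : comNzRingType) (n : nat).
Implicit Types (M : 'M[R]_n) (u v w : 'cV[R]_n).

Definition mxform M u v : R := (u^T *m M *m v) 0 0.

Lemma mxformBl M u v w : mxform M (u - v) w = mxform M u w - mxform M v w.
Proof. by rewrite /mxform linearB /= !mulmxBl !mxE. Qed.

Lemma mxformBr M u v w : mxform M u (v - w) = mxform M u v - mxform M u w.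
Proof. by rewrite /mxform !mulmxBr !mxE. Qed.

Lemma mxformZl M a u v : mxform M (a *: u) v = a * mxform M u v.
Proof. by rewrite /mxform linearZ /= -!scalemxAl !mxE. Qed.

Lemma mxformZr M a u v : mxform M u (a *: v) = a * mxform M u v.
Proof. by rewrite /mxform -!scalemxAr !mxE. Qed.

Lemma mxformC M u v : M^T = M -> mxform M u v = mxform M v u.
Proof.
move=> MT; rewrite /mxform -[in RHS]MT.
transitivity ((u^T *m M *m v)^T 0 0); first by rewrite [RHS]mxE.
by rewrite !trmx_mul !trmxK mulmxA.
Qed.

Lemma mxform_delta M i j : mxform M (delta_mx i 0) (delta_mx j 0) = M i j.
Proof. by rewrite /mxform -colE trmx_delta -rowE !mxE. Qed.

End MxForm.

Section PosDef.
Variables (R : realFieldType) (n : nat) (S : 'M[R]_n).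
Hypothesis Spd : posdef S.

Lemma posdef_sym i j : S i j = S j i.
Proof. by rewrite -[in LHS]Spd.1 mxE. Qed.

Lemma posdef_unitmx : S \in unitmx.
Proof.
rewrite unitmxE unitfE; apply/negP => /det0P[v v0 vS].
have := Spd.2 v^T; rewrite trmx_eq0 => /(_ v0).
by rewrite trmxK vS mul0mx mxE ltxx.
Qed.

Lemma posdef_inv : posdef (invmx S).
Proof.
split=> [|x x0]; first by rewrite trmx_inv Spd.1.
have [y xE] : exists y, x = S *m y.
  by exists (invmx S *m x); rewrite mulmxA mulmxV ?mul1mx ?posdef_unitmx.
have y0 : y != 0 by apply: contraNneq x0 => y0; rewrite xE y0 mulmx0.
rewrite xE trmx_mul Spd.1 -mulmxA (mulmxA (invmx S)).
by rewrite mulVmx ?posdef_unitmx // mul1mx; apply: Spd.2.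
Qed.

Lemma posdef_diag_gt0 k : 0 < S k k.
Proof.
rewrite -mxform_delta; apply: Spd.2; apply/eqP => /matrixP/(_ k 0).
by rewrite !mxE !eqxx; apply/eqP; rewrite oner_eq0.
Qed.

Lemma posdef_restrict_eq0 (A : {set 'I_n}) (v : 'cV[R]_n) :
  (forall x, x \in A -> v x 0 * \sum_(y in A) S x y * v y 0 = 0) ->
  forall x, x \in A -> v x 0 = 0.
Proof.
move=> vA; pose z := \col_y (if y \in A then v y 0 else 0).
suff /matrixP z0 : z = 0 by move=> x xA; have := z0 x 0; rewrite !mxE xA.
apply: contraTeq isT => z0; have := Spd.2 _ z0.
rewrite -mulmxA mxE big1 ?ltxx // => x _; rewrite !mxE.
case: ifP => xA; last by rewrite mul0r.
rewrite -[RHS](vA x xA) [in RHS]big_mkcond; congr (_ * _); apply: eq_bigr => y _.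
by rewrite !mxE; case: ifP; rewrite ?mulr0.
Qed.

End PosDef.

Section InverseDiagonal.
Variables (R : realFieldType) (n : nat) (S : 'M[R]_n).
Hypothesis Spd : posdef S.

Lemma invmx_diag_gt0 k : 0 < invmx S k k.
Proof. exact/posdef_diag_gt0/posdef_inv. Qed.

Lemma mxform_invmx_delta u k : mxform S u (invmx S *m delta_mx k 0) = u k 0.
Proof.
by rewrite /mxform mulmxA -(mulmxA _ S) mulmxV ?posdef_unitmx // mulmx1 -colE !mxE.
Qed.

(* The minimum of the form on [x k 0 = 1] is attained at [x = s *: y] below. *)
Lemma inv_invmx_diag_le_mxform (x : 'cV[R]_n) k : x k 0 = 1 ->
  1 / invmx S k k <= mxform S x x.
Proof.
move=> xk; pose s := 1 / invmx S k k; pose y : 'cV_n := invmx S *m delta_mx k 0.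
have yy : mxform S y y = invmx S k k by rewrite mxform_invmx_delta /y -colE mxE.
have xy : mxform S x y = 1 by rewrite mxform_invmx_delta.
have yx : mxform S y x = 1 by rewrite mxformC ?Spd.1.
have : 0 <= mxform S (x - s *: y) (x - s *: y).
  have [->|xy0] := eqVneq (x - s *: y) 0; first by rewrite /mxform mulmx0 mxE.
  exact/ltW/Spd.2.
have sO : s * invmx S k k = 1 by rewrite /s div1r mulVf // gt_eqF ?invmx_diag_gt0.
rewrite mxformBl !mxformBr !mxformZl !mxformZr xy yx yy sO /s; lra.
Qed.

Lemma inv_invmx_diag_le_schur m k : m != k ->
  1 / invmx S k k <= S k k - S m k ^+ 2 / S m m.
Proof.
move=> mk; pose t := S m k / S m m.
have -> : S k k - S m k ^+ 2 / S m m =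
    mxform S (delta_mx k 0 - t *: delta_mx m 0) (delta_mx k 0 - t *: delta_mx m 0).
  rewrite mxformBl !mxformBr !mxformZl !mxformZr !mxform_delta (posdef_sym Spd k m) /t.
  by field; rewrite gt_eqF ?posdef_diag_gt0.
by apply: inv_invmx_diag_le_mxform; rewrite !mxE !eqxx eq_sym (negbTE mk) /=; ring.
Qed.

End InverseDiagonal.

Definition cov_ratio (R : fieldType) n (S : 'M[R]_n) k i j := S i k * S k j / S i j.

Lemma ci_graph_adjE (R : realFieldType) n (S : 'M[R]_n) i j :
  adj (ci_graph S) i j = (i != j) && (invmx S i j != 0).
Proof. by rewrite /adj inE. Qed.

Lemma ci_graph_irr (R : realFieldType) n (S : 'M[R]_n) : irreflexive (adj (ci_graph S)).
Proof. by move=> i; rewrite ci_graph_adjE eqxx. Qed.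

Lemma ci_graph_sym (R : realFieldType) n (S : 'M[R]_n) :
  posdef S -> symmetric (adj (ci_graph S)).
Proof.
by move=> Spd i j; rewrite !ci_graph_adjE eq_sym (posdef_sym (posdef_inv Spd)).
Qed.

Section TreeCovariance.
Variables (R : realFieldType) (n : nat) (S : 'M[R]_n).
Hypotheses (Spd : posdef S) (Stree : is_tree (ci_graph S)).
Local Notation e := (adj (ci_graph S)).
Let e_sym := ci_graph_sym Spd.
Let e_irr := ci_graph_irr S.
Let e_conn := Stree.1.
Let e_acyc := Stree.2.

Lemma invmx_component k i x (v : 'cV[R]_n) : x \in component e k i ->
  (invmx S *m v) x 0 =
    \sum_(y in component e k i) invmx S x y * v y 0 + invmx S x k * v k 0.
Proof.
move=> xA; rewrite mxE (bigID (mem (component e k i))) /=; congr (_ + _).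
rewrite (bigD1 k) /=; last by rewrite inE eqxx.
rewrite big1 ?addr0 // => y /andP[yA yk].
have := component_closed xA yA yk; rewrite ci_graph_adjE negb_and !negbK.
case/orP=> [/eqP xy|/eqP->]; last by rewrite mul0r.
by move: yA; rewrite -xy xA.
Qed.

(* [invmx S *m v] vanishes on the component of [i] and so does [v k 0], so the
   restriction of [v] to that component is isotropic for [invmx S]. *)
Lemma cov_separates k i j : separates e k i j -> S i j = S i k * S k j / S k k.
Proof.
case/and3P=> ik jk nij; pose c := S k j / S k k.
pose v : 'cV[R]_n := S *m (delta_mx j 0 - c *: delta_mx k 0).
have vE x : v x 0 = S x j - c * S x k.
  by rewrite /v mulmxBr -scalemxAr -!colE !mxE.
have Sv : invmx S *m v = delta_mx j 0 - c *: delta_mx k 0.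
  by rewrite /v mulmxA mulVmx ?posdef_unitmx ?mul1mx.
have vk : v k 0 = 0 by rewrite vE /c divfK ?subrr // gt_eqF ?posdef_diag_gt0.
have iA : i \in component e k i by rewrite inE ik connect0.
have vA x : x \in component e k i ->
    v x 0 * \sum_(y in component e k i) invmx S x y * v y 0 = 0.
  move=> xA; have := invmx_component v xA; rewrite vk mulr0 addr0 Sv => <-.
  have /andP[xk ix] : (x != k) && connect (avoid e k) i x by move: xA; rewrite inE.
  have xj : x != j by apply: contraNneq nij => <-.
  by rewrite !mxE (negbTE xj) (negbTE xk) /= mulr0 subr0 mulr0.
have /eqP := posdef_restrict_eq0 (posdef_inv Spd) vA iA.
by rewrite vE subr_eq0 => /eqP ->; rewrite mulrC mulrA.
Qed.

(* If [S a b = 0], the column [v] of [b] restricted to the component of [a] is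
   isotropic for [invmx S], as [a] is the only neighbour of [b] there; then
   [(invmx S *m v) a 0 = 0] reduces to [invmx S a b * S b b = 0]. *)
Lemma cov_adj_neq0 a b : e a b -> S a b != 0.
Proof.
move=> eab; apply/negP => /eqP Sab.
have ab : a != b by apply: contraTneq eab => ->; rewrite e_irr.
pose v : 'cV[R]_n := S *m delta_mx b 0.
have vE x : v x 0 = S x b by rewrite /v -colE mxE.
have Sv : invmx S *m v = delta_mx b 0.
  by rewrite /v mulmxA mulVmx ?posdef_unitmx ?mul1mx.
have eba : e b a by rewrite e_sym.
have aA : a \in component e b a by rewrite inE ab connect0.
have vA x : x \in component e b a ->
    v x 0 * \sum_(y in component e b a) invmx S x y * v y 0 = 0.
  move=> xA; have [->|xa] := eqVneq x a; first by rewrite vE Sab mul0r.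
  have /andP[xb ax] : (x != b) && connect (avoid e b) a x by move: xA; rewrite inE.
  have Oxb : invmx S x b = 0.
    apply/eqP; apply: contraTT ax => Oxb.
    have ebx : e b x by rewrite ci_graph_adjE eq_sym xb (posdef_sym (posdef_inv Spd)).
    have ax' : a != x by rewrite eq_sym.
    by case/and3P: (separates_neighbours e_sym e_irr e_acyc eba ebx ax').
  have := invmx_component v xA; rewrite Sv Oxb mul0r addr0 !mxE (negbTE xb) /= => <-.
  by rewrite mulr0.
have := invmx_component v aA; rewrite Sv vE mxE (negbTE ab) /= big1 => [|y yA].
  rewrite add0r => /esym/eqP; rewrite mulf_eq0 (gt_eqF (posdef_diag_gt0 Spd b)) orbF.
  by move: eab; rewrite ci_graph_adjE => /andP[_ /negbTE ->].
by rewrite (posdef_restrict_eq0 (posdef_inv Spd) vA yA) mulr0.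
Qed.

Lemma tree_cov_neq0 i j : S i j != 0.
Proof.
have [->|ij] := eqVneq i j; first by rewrite gt_eqF ?posdef_diag_gt0.
have [p [ip up lp]] := connect_uniqP (e_conn i j).
have : p != [::] by apply: contraNneq ij => p0; rewrite -lp p0.
rewrite -lp {j ij lp}; elim: p i ip up => [//|u p IH] i ip up _.
case: p IH ip up => [|v q] IH ip up; first by apply: cov_adj_neq0; case/andP: ip.
have sep := @interior_separates _ _ e_sym e_irr e_acyc i [::] u (v :: q) ip up isT.
rewrite (cov_separates sep).
case/andP: ip => eiu ip; case/andP: up => _ up.
have Suj : S u (last v q) != 0 by apply: IH.
have Suu : (S u u)^-1 != 0 by rewrite invr_eq0 gt_eqF ?posdef_diag_gt0.
by rewrite !mulf_neq0 ?(cov_adj_neq0 eiu).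
Qed.

Lemma cov_ratio_separates k i j : separates e k i j -> cov_ratio S k i j = S k k.
Proof.
move=> sep; rewrite /cov_ratio (cov_separates sep).
by field; rewrite !tree_cov_neq0.
Qed.

Lemma cov_ratio_edge k i j : e i j -> i != k -> j != k ->
  exists2 m, m != k & cov_ratio S k i j = S m k ^+ 2 / S m m.
Proof.
move=> eij ik jk; rewrite eq_sym in ik; rewrite eq_sym in jk.
case/orP: (separates_edge e_sym e_irr e_acyc e_conn eij ik jk) => sep.
  exists i; first by rewrite eq_sym.
  rewrite /cov_ratio (cov_separates sep) (posdef_sym Spd k i).
  by field; rewrite !tree_cov_neq0.
exists j; first by rewrite eq_sym.
rewrite /cov_ratio (posdef_sym Spd i k) (cov_separates sep).
rewrite (posdef_sym Spd j i) (posdef_sym Spd k j).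
by field; rewrite !tree_cov_neq0.
Qed.

(* [m] is the vertex where the paths from [i] and [j] to [k] meet. *)
Lemma cov_ratio_connect k i j : i != k -> i != j -> connect (avoid e k) i j ->
  exists2 m, m != k & cov_ratio S k i j = S m k ^+ 2 / S m m.
Proof.
move=> ik ij /connect_uniqP[p [ip up lp]].
have : p != [::] by apply: contraNneq ij => p0; rewrite -lp p0.
rewrite -lp {j ij lp}; elim: p i ik ip up => [//|u p IH] i ik ip up _.
move: ip; rewrite path_avoidE // => /andP[ip]; rewrite in_cons negb_or => /andP[ku kp].
have uk : u != k by rewrite eq_sym.
case: p IH ip up kp => [|v q] IH ip up kp.
  by apply: cov_ratio_edge => //; case/andP: ip.
have sep := @interior_separates _ _ e_sym e_irr e_acyc i [::] u (v :: q) ip up isT.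
case/orP: (separates_split sep ku) => sep'.
  have -> : cov_ratio S k i (last v q) = cov_ratio S k u (last v q).
    rewrite /cov_ratio (cov_separates sep) (cov_separates sep').
    by field; rewrite !tree_cov_neq0.
  have uvq : path e u (v :: q) by case/andP: ip.
  by apply: IH => //; [rewrite path_avoidE // uvq | case/andP: up].
have -> : cov_ratio S k i (last v q) = cov_ratio S k i u.
  rewrite /cov_ratio (cov_separates sep) (cov_separates sep').
  by field; rewrite !tree_cov_neq0.
by apply: cov_ratio_edge => //; case/andP: ip.
Qed.

Lemma cov_ratio_nonseparating k i j : i != k -> j != k -> i != j ->
  ~~ separates e k i j -> cov_ratio S k i j + 1 / invmx S k k <= S k k.
Proof.
rewrite /separates => ik jk ij; rewrite ik jk negbK.
case/(cov_ratio_connect ik ij) => m mk ->.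
by have := inv_invmx_diag_le_schur Spd mk; lra.
Qed.

Lemma cov_ratio_le_diag k i j : i != k -> j != k -> i != j ->
  cov_ratio S k i j <= S k k.
Proof.
move=> ik jk ij; have [/cov_ratio_separates ->//|nsep] := boolP (separates e k i j).
have := cov_ratio_nonseparating ik jk ij nsep.
have : 0 < 1 / invmx S k k by rewrite divr_gt0 ?invmx_diag_gt0.
lra.
Qed.

End TreeCovariance.

Section Decomposition.
Variables (R : realFieldType) (n : nat) (S T D E : 'M[R]_n).
Hypotheses (Spd : posdef S) (Stree : is_tree (ci_graph S)) (Dnn : nonneg_diag D).
Hypotheses (Tpd : posdef T) (Ttree : is_tree (ci_graph T)) (Ediag : is_diag_mx E).
Hypothesis E_leaf : forall a, is_leaf (ci_graph S) a -> E a a < 1 / invmx S a a.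
Hypothesis SDTE : S + D = T + E.
Local Notation eS := (adj (ci_graph S)).
Local Notation eT := (adj (ci_graph T)).

Lemma offdiag_eq i j : i != j -> T i j = S i j.
Proof.
move=> ij; have /matrixP/(_ i j) := SDTE; rewrite !mxE.
by rewrite (is_diag_mxP Dnn.1) // (is_diag_mxP Ediag) // !addr0 => ->.
Qed.

Lemma diag_sub k : S k k - T k k = E k k - D k k.
Proof. by have /matrixP/(_ k k) := SDTE; rewrite !mxE => SDkk; lra. Qed.

Lemma cov_ratio_eq k i j : i != k -> j != k -> i != j ->
  cov_ratio T k i j = cov_ratio S k i j.
Proof. by move=> ik jk ij; rewrite /cov_ratio !offdiag_eq // eq_sym. Qed.

Lemma separates_ci_graph k x y : separates eT k x y -> separates eS k x y.
Proof.
move=> sepT; have [xk yk xy] := separates_neq sepT.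
apply: contraT => nsepS.
have gap : 1 / invmx S k k <= S k k - T k k.
  have := cov_ratio_nonseparating Spd Stree xk yk xy nsepS.
  by rewrite -(cov_ratio_eq xk yk xy) (cov_ratio_separates Tpd Ttree sepT); lra.
have Ok_gt0 : 0 < 1 / invmx S k k by rewrite divr_gt0 ?invmx_diag_gt0.
have : is_leaf (ci_graph S) k.
  apply/eqP.
  apply: (nonseparating_leaf (ci_graph_sym Spd) (ci_graph_irr S) Stree.2 Stree.1 xk).
  move=> u v; apply/negP => sepS; have [uk vk uv] := separates_neq sepS.
  have := cov_ratio_le_diag Tpd Ttree uk vk uv.
  by rewrite cov_ratio_eq // (cov_ratio_separates Spd Stree sepS); lra.
by move/E_leaf; have := diag_sub k; have := Dnn.2 k; lra.
Qed.

Lemma ci_graph_subrel : subrel eS eT.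
Proof.
move=> a b eab; have ab : a != b by apply: contraTneq eab => ->; rewrite ci_graph_irr.
apply: contraT => neab.
have [k sepT] :=
  separates_nonadj (ci_graph_sym Tpd) (ci_graph_irr T) Ttree.2 Ttree.1 ab neab.
have [ak bk _] := separates_neq sepT.
by move/and3P: (separates_ci_graph sepT) => [_ _]; rewrite adj_connect_avoid.
Qed.

End Decomposition.

Theorem theorem3 (R : realFieldType) (n : nat)
  (Sstar Dstar S' D' : 'M[R]_n) :
  posdef Sstar ->
  is_tree (ci_graph Sstar) ->
  nonneg_diag Dstar ->
  (forall a, is_leaf (ci_graph Sstar) a ->
     Dstar a a < 1 / invmx Sstar a a) ->
  posdef S' ->
  is_tree (ci_graph S') ->
  nonneg_diag D' ->
  (forall a, is_leaf (ci_graph Sstar) a ->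
     D' a a < 1 / invmx Sstar a a) ->
  Sstar + Dstar = S' + D' ->
  ci_graph S' = ci_graph Sstar.
Proof.
move=> Spd Stree Dnn _ Tpd Ttree Enn E_leaf SDTE.
have sub := ci_graph_subrel Spd Stree Dnn Tpd Ttree Enn.1 E_leaf SDTE.
apply/setP => -[a b].
exact: (connected_subrel_forest sub (ci_graph_sym Spd) (ci_graph_irr S') Stree.1 Ttree.2).
Qed.
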